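(* Consider decorated ideal hyperbolic triangles, parametrized by their generalized edge lengths $(l_1,l_2,l_3)\in\mathbb{R}^3$, with generalized angles $\theta_1,\theta_2,\theta_3$ ($\theta_i$ opposite the edge of length $l_i$), and set $x_i=\frac12(\theta_j+\theta_k-\theta_i)$ for $\{i,j,k\}=\{1,2,3\}$. Then the differential $1$-form $\omega=\sum_{i=1}^3 x_i\,dl_i$ is closed on $\mathbb{R}^3$, its integral $W(l)=\int_0^l\omega$ is a smooth strictly concave function on $\mathbb{R}^3$ (with negative definite Hessian), and $\partial W/\partial l_i=x_i$.
   Context: A decorated ideal triangle is an ideal hyperbolic triangle with a horodisk chosen at each of its three ideal vertices. The generalized angle $\theta_i$ at a vertex is twice the length of the arc of the chosen horocycle lying inside the triangle. The generalized length of an edge joining vertices $u,v$ with horodisks $B_u,B_v$ is the distance between $B_u$ and $B_v$ if they are disjoint, and minus the distance between the two points $\partial B_u\cap e$, $\partial B_v\cap e$ otherwise. Every $(l_1,l_2,l_3)\in\mathbb{R}^3$ is realized by a unique decorated ideal triangle up to isometry, and the angles and lengths satisfy $\frac{e^{l_i}}{2}=\frac{2}{\theta_j\theta_k}$ for $\{i,j,k\}=\{1,2,3\}$. *)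

From Stdlib Require Import Reals Lra ClassicalEpsilon.
Open Scope R_scope.

Inductive ix : Type := I1 | I2 | I3.

Definition ix_eqb (i j : ix) : bool :=
  match i, j with I1, I1 | I2, I2 | I3, I3 => true | _, _ => false end.

(* For i, (nxt i, prv i) = the other two indices j, k. *)
Definition nxt (i : ix) : ix := match i with I1 => I2 | I2 => I3 | I3 => I1 end.
Definition prv (i : ix) : ix := match i with I1 => I3 | I2 => I1 | I3 => I2 end.

Definition pt := ix -> R.

Definition sum3 (f : ix -> R) : R := f I1 + f I2 + f I3.

Definition upd (p : pt) (i : ix) (t : R) : pt :=
  fun j => if ix_eqb j i then t else p j.

Definition has_partial (f : pt -> R) (i : ix) (l : pt) (d : R) : Prop :=
  derivable_pt_lim (fun t => f (upd l i t)) (l i) d.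

Definition dist3 (p q : pt) : R :=
  Rmax (Rabs (p I1 - q I1)) (Rmax (Rabs (p I2 - q I2)) (Rabs (p I3 - q I3))).

Definition continuous3 (f : pt -> R) : Prop :=
  forall l eps, 0 < eps -> exists delta, 0 < delta /\
    forall l', dist3 l l' < delta -> Rabs (f l' - f l) < eps.

Fixpoint Ck (n : nat) (f : pt -> R) : Prop :=
  continuous3 f /\
  match n with
  | O => True
  | S m => forall i, exists g : pt -> R,
             (forall l, has_partial f i l (g l)) /\ Ck m g
  end.

Definition smooth3 (f : pt -> R) : Prop := forall n, Ck n f.

Definition strictly_concave3 (f : pt -> R) : Prop :=
  forall (p q : pt) (t : R), (exists i, p i <> q i) -> 0 < t < 1 ->
    (1 - t) * f p + t * f q < f (fun i => (1 - t) * p i + t * q i).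

(* Riemann integral over [0,1]; defined as 0 when f is not integrable. *)
Definition RInt01 (f : R -> R) : R :=
  match excluded_middle_informative (inhabited (Riemann_integrable f 0 1)) with
  | left H => RiemannInt (epsilon H (fun _ => True))
  | right _ => 0
  end.

(* Given the angle functions theta (theta l i = generalized angle at vertex i
   of the decorated ideal triangle with generalized lengths l),
   x_i = (theta_j + theta_k - theta_i)/2. *)
Definition xcoef (theta : pt -> ix -> R) (l : pt) (i : ix) : R :=
  (theta l (nxt i) + theta l (prv i) - theta l i) / 2.

Definition omega_seg (theta : pt -> ix -> R) (l : pt) (t : R) : R :=
  sum3 (fun i => xcoef theta (fun j => t * l j) i * l i).

(* W(l) = int_0^l omega, along the straight segment from 0 to l. *)
Definition Wfun (theta : pt -> ix -> R) (l : pt) : R :=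
  RInt01 (omega_seg theta l).

From Stdlib Require Import Reals.
From Stdlib Require Import Lra FunctionalExtensionality ClassicalEpsilon.
Open Scope R_scope.

(* Put alpha_i(l) = (l_i - l_j - l_k)/2.  The length-angle law forces
   theta_i = 2 exp(alpha_i) (the three relations determine the three positive
   angles), hence x_i = E_j + E_k - E_i with E_m = exp(alpha_m).  All the
   functions met in the proof are therefore "exponential combinations"
   c0 + sum_m c_m E_m; this class is closed under partial derivatives
   (d E_m / d l_j = +-E_m/2), so its members are smooth, and for negative
   coefficients they are strictly concave because exp is strictly convex and
   l |-> alpha(l) is injective.
   Along the segment t |-> t l, omega has the explicit primitive
   -2 sum_m exp(t alpha_m(l)), so by the fundamental theorem of calculus
   W = 6 - 2 (E_1 + E_2 + E_3).  Every claim then follows: dW/dl_i = x_i, the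
   Hessian (the Jacobian of x) is a symmetric exponential combination whose
   quadratic form is -2 sum_m E_m alpha_m(v)^2 < 0. *)

Lemma nxt_nxt i : nxt (nxt i) = prv i.
Proof. destruct i; reflexivity. Qed.

Lemma prv_nxt i : prv (nxt i) = i.
Proof. destruct i; reflexivity. Qed.

Lemma nxt_prv i : nxt (prv i) = i.
Proof. destruct i; reflexivity. Qed.

Lemma prv_prv i : prv (prv i) = nxt i.
Proof. destruct i; reflexivity. Qed.

Lemma sum3_lt (f g : ix -> R) :
  (forall m, f m <= g m) -> (exists m, f m < g m) -> sum3 f < sum3 g.
Proof.
  intros Hle [m Hm]; unfold sum3.
  pose proof (Hle I1); pose proof (Hle I2); pose proof (Hle I3).
  destruct m; lra.
Qed.

Definition alpha (l : pt) (m : ix) : R := (l m - l (nxt m) - l (prv m)) / 2.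
Definition ealpha (l : pt) (m : ix) : R := exp (alpha l m).

(* The sign pattern of alpha: sgn m i is the coefficient of l_i in 2 alpha_m,
   so that d alpha_m / d l_i = sgn m i / 2. *)
Definition sgn (m i : ix) : R := if ix_eqb m i then 1 else -1.

Lemma alpha_lin (a b : R) (p q : pt) m :
  alpha (fun i => a * p i + b * q i) m = a * alpha p m + b * alpha q m.
Proof. destruct m; unfold alpha; simpl; field. Qed.

Lemma alpha_scale (l : pt) t m : alpha (fun j => t * l j) m = t * alpha l m.
Proof. destruct m; unfold alpha; simpl; field. Qed.

Lemma alpha_upd (l : pt) j t m :
  alpha (upd l j t) m = alpha l m + sgn m j / 2 * (t - l j).
Proof. destruct m, j; unfold alpha, upd, sgn; simpl; field. Qed.

Lemma coord_from_alpha (l : pt) i : l i = - (alpha l (nxt i) + alpha l (prv i)).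
Proof. destruct i; unfold alpha; simpl; field. Qed.

Lemma alpha_nondegenerate (v : pt) :
  (exists i, v i <> 0) -> exists m, alpha v m <> 0.
Proof.
  intros [i Hi].
  destruct (Req_dec (alpha v (nxt i)) 0) as [Hn|Hn]; [|eauto].
  destruct (Req_dec (alpha v (prv i)) 0) as [Hp|Hp]; [|eauto].
  exfalso; apply Hi; rewrite coord_from_alpha, Hn, Hp; ring.
Qed.

Lemma alpha_separates (p q : pt) :
  (exists i, p i <> q i) -> exists m, alpha p m <> alpha q m.
Proof.
  intros [i Hi].
  destruct (alpha_nondegenerate (fun j => 1 * p j + -1 * q j)) as [m Hm].
  - exists i; lra.
  - exists m; rewrite alpha_lin in Hm; lra.
Qed.

Section AngleLaw.
Variable theta : pt -> ix -> R.
Hypothesis Hpos : forall l i, 0 < theta l i.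
Hypothesis Hrel : forall l i,
  exp (l i) / 2 = 2 / (theta l (nxt i) * theta l (prv i)).

Lemma angle_product l i : theta l (nxt i) * theta l (prv i) * exp (l i) = 4.
Proof.
  assert (HP : 0 < theta l (nxt i) * theta l (prv i))
    by (apply Rmult_lt_0_compat; auto).
  transitivity (2 * (theta l (nxt i) * theta l (prv i)) * (exp (l i) / 2));
    [field|].
  rewrite Hrel; field.
  split; apply Rgt_not_eq, Hpos.
Qed.

(* Three positive numbers with prescribed pairwise products are determined:
   a^2 = (ca)(ab)/(bc). *)
Lemma pairwise_products_solve a b c u v w e :
  0 < a -> 0 < b -> 0 < c -> 0 < v -> 0 < w -> 0 < e ->
  b * c * u = 4 -> c * a * v = 4 -> a * b * w = 4 -> e * e * v * w = u ->
  a = 2 * e.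
Proof.
  intros Ha Hb Hc Hv Hw He Hbc Hca Hab Hvw.
  assert (Hsq : (a * a) * (v * w * (b * c)) = (2 * e) * (2 * e) * (v * w * (b * c))).
  { transitivity ((c * a * v) * (a * b * w)); [ring|].
    rewrite Hca, Hab.
    transitivity (4 * (b * c * u)); [rewrite Hbc; ring|].
    rewrite <- Hvw; ring. }
  apply Rsqr_inj; [lra|lra|].
  unfold Rsqr; apply Rmult_eq_reg_r with (v * w * (b * c)); [exact Hsq|].
  apply Rgt_not_eq; repeat apply Rmult_lt_0_compat; auto.
Qed.

Lemma theta_eq l i : theta l i = 2 * ealpha l i.
Proof.
  apply pairwise_products_solve with (theta l (nxt i)) (theta l (prv i))
    (exp (l i)) (exp (l (nxt i))) (exp (l (prv i)));
    try apply exp_pos; auto.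
  - apply angle_product.
  - rewrite <- (angle_product l (nxt i)), nxt_nxt, prv_nxt; ring.
  - rewrite <- (angle_product l (prv i)), nxt_prv, prv_prv; ring.
  - unfold ealpha; rewrite <- !exp_plus; f_equal; unfold alpha; field.
Qed.

End AngleLaw.

Definition expcomb (c0 : R) (c : ix -> R) (l : pt) : R :=
  c0 + sum3 (fun m => c m * ealpha l m).

Lemma xcoef_expcomb theta
  (Hpos : forall l i, 0 < theta l i)
  (Hrel : forall l i, exp (l i) / 2 = 2 / (theta l (nxt i) * theta l (prv i)))
  l i :
  xcoef theta l i = expcomb 0 (fun m => - sgn m i) l.
Proof.
  unfold xcoef; rewrite !(theta_eq theta Hpos Hrel).
  destruct i; unfold expcomb, sum3, sgn; simpl; field.
Qed.

Lemma derivable_pt_lim_sum3 (f : ix -> R -> R) (d : ix -> R) x :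
  (forall m, derivable_pt_lim (f m) x (d m)) ->
  derivable_pt_lim (fun t => sum3 (fun m => f m t)) x (sum3 d).
Proof.
  intro H; unfold sum3.
  apply (derivable_pt_lim_plus (fun t => f I1 t + f I2 t) (f I3)); auto.
  apply (derivable_pt_lim_plus (f I1) (f I2)); auto.
Qed.

Lemma derivable_pt_lim_exp_affine c d x :
  derivable_pt_lim (fun t => exp (c * t + d)) x (c * exp (c * x + d)).
Proof.
  assert (Hlin : derivable_pt_lim (fun t => c * t + d) x (c * 1 + 0)).
  { apply (derivable_pt_lim_plus (fun t => c * t) (fun _ => d)).
    - apply (derivable_pt_lim_scal id), derivable_pt_lim_id.
    - apply derivable_pt_lim_const. }
  rewrite Rmult_1_r, Rplus_0_r in Hlin.
  rewrite Rmult_comm.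
  exact (derivable_pt_lim_comp _ exp _ _ _ Hlin (derivable_pt_lim_exp _)).
Qed.

Lemma partial_ealpha m j l :
  has_partial (fun p => ealpha p m) j l (sgn m j / 2 * ealpha l m).
Proof.
  unfold has_partial, ealpha.
  apply derivable_pt_lim_ext with
    (f := fun t => exp (sgn m j / 2 * t + (alpha l m - sgn m j / 2 * l j))).
  - intro t; rewrite alpha_upd; f_equal; ring.
  - replace (exp (alpha l m))
      with (exp (sgn m j / 2 * l j + (alpha l m - sgn m j / 2 * l j)))
      by (f_equal; ring).
    apply derivable_pt_lim_exp_affine.
Qed.

Lemma partial_expcomb c0 c i l :
  has_partial (expcomb c0 c) i l (expcomb 0 (fun m => c m * sgn m i / 2) l).
Proof.
  unfold has_partial, expcomb.
  replace (0 + sum3 (fun m => c m * sgn m i / 2 * ealpha l m))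
    with (0 + sum3 (fun m => c m * (sgn m i / 2 * ealpha l m)))
    by (unfold sum3; field).
  apply (derivable_pt_lim_plus (fun _ => c0)); [apply derivable_pt_lim_const|].
  apply (derivable_pt_lim_sum3 (fun m t => c m * ealpha (upd l i t) m)).
  intro m; apply (derivable_pt_lim_scal (fun t => ealpha (upd l i t) m)).
  apply partial_ealpha.
Qed.

Lemma coord_diff_bounds (l l' : pt) i :
  - dist3 l l' <= l i - l' i <= dist3 l l'.
Proof.
  assert (Hi : Rabs (l i - l' i) <= dist3 l l').
  { unfold dist3; destruct i.
    - apply Rmax_l.
    - eapply Rle_trans; [apply Rmax_l|apply Rmax_r].
    - eapply Rle_trans; [apply Rmax_r|apply Rmax_r]. }
  pose proof (Rle_abs (l i - l' i)); pose proof (Rle_abs (- (l i - l' i))).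
  rewrite Rabs_Ropp in *; lra.
Qed.

Lemma alpha_lipschitz (l l' : pt) m :
  Rabs (alpha l' m - alpha l m) <= 3 / 2 * dist3 l l'.
Proof.
  pose proof (coord_diff_bounds l l' I1); pose proof (coord_diff_bounds l l' I2);
    pose proof (coord_diff_bounds l l' I3).
  apply Rabs_le.
  destruct m; unfold alpha; simpl; lra.
Qed.

Lemma continuous3_ealpha m : continuous3 (fun l => ealpha l m).
Proof.
  intros l eps Heps.
  assert (Hexp : continuity_pt exp (alpha l m)).
  { apply derivable_continuous_pt; exists (exp (alpha l m)).
    apply derivable_pt_lim_exp. }
  destruct (Hexp eps Heps) as [d [Hd Hclose]].
  exists (d / 2); split; [lra|].
  intros l' Hl'.
  pose proof (alpha_lipschitz l l' m).
  unfold ealpha; destruct (Req_dec (alpha l' m) (alpha l m)) as [->|Hne].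
  - rewrite Rminus_diag, Rabs_R0; exact Heps.
  - apply (Hclose (alpha l' m)); split; [split; [exact I|auto]|].
    simpl; unfold Rdist; lra.
Qed.

Lemma continuous3_const c : continuous3 (fun _ => c).
Proof.
  intros l eps Heps; exists 1; split; [lra|].
  intros; rewrite Rminus_diag, Rabs_R0; exact Heps.
Qed.

Lemma continuous3_plus f g :
  continuous3 f -> continuous3 g -> continuous3 (fun l => f l + g l).
Proof.
  intros Hf Hg l eps Heps.
  destruct (Hf l (eps / 2)) as [d1 [Hd1 H1]]; [lra|].
  destruct (Hg l (eps / 2)) as [d2 [Hd2 H2]]; [lra|].
  exists (Rmin d1 d2); split; [apply Rmin_pos; auto|].
  intros l' Hd.
  pose proof (H1 l' (Rlt_le_trans _ _ _ Hd (Rmin_l _ _))).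
  pose proof (H2 l' (Rlt_le_trans _ _ _ Hd (Rmin_r _ _))).
  replace (f l' + g l' - (f l + g l)) with ((f l' - f l) + (g l' - g l)) by ring.
  eapply Rle_lt_trans; [apply Rabs_triang|lra].
Qed.

Lemma continuous3_scal c f : continuous3 f -> continuous3 (fun l => c * f l).
Proof.
  intros Hf l eps Heps.
  pose proof (Rabs_pos c).
  destruct (Hf l (eps / (Rabs c + 1))) as [d [Hd Hclose]];
    [apply Rdiv_lt_0_compat; lra|].
  exists d; split; auto; intros l' Hl'.
  specialize (Hclose l' Hl').
  replace (c * f l' - c * f l) with (c * (f l' - f l)) by ring.
  rewrite Rabs_mult.
  apply Rle_lt_trans with (Rabs c * (eps / (Rabs c + 1))).
  - apply Rmult_le_compat_l; lra.
  - apply Rlt_le_trans with ((Rabs c + 1) * (eps / (Rabs c + 1))).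
    + apply Rmult_lt_compat_r; [apply Rdiv_lt_0_compat|]; lra.
    + right; field; lra.
Qed.

Lemma continuous3_expcomb c0 c : continuous3 (expcomb c0 c).
Proof.
  unfold expcomb, sum3.
  repeat apply continuous3_plus; auto using continuous3_const.
  all: apply continuous3_scal, continuous3_ealpha.
Qed.

Lemma smooth3_expcomb c0 c : smooth3 (expcomb c0 c).
Proof.
  intro n; revert c0 c; induction n as [|n IH]; intros c0 c; simpl.
  - split; [apply continuous3_expcomb|exact I].
  - split; [apply continuous3_expcomb|].
    intro i; eexists; split; [intro l; apply partial_expcomb|apply IH].
Qed.

Lemma exp_strict_convex x y t : 0 < t < 1 ->
  exp ((1 - t) * x + t * y) <= (1 - t) * exp x + t * exp y /\
  (x <> y -> exp ((1 - t) * x + t * y) < (1 - t) * exp x + t * exp y).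
Proof.
  intro Ht; set (z := (1 - t) * x + t * y).
  assert (Ex : exp x = exp z * exp (x - z)) by (rewrite <- exp_plus; f_equal; ring).
  assert (Ey : exp y = exp z * exp (y - z)) by (rewrite <- exp_plus; f_equal; ring).
  assert (Hbal : (1 - t) * (x - z) + t * (y - z) = 0) by (unfold z; ring).
  pose proof (exp_pos z).
  pose proof (exp_ineq1_le (x - z)); pose proof (exp_ineq1_le (y - z)).
  rewrite Ex, Ey; split.
  - assert (1 <= (1 - t) * exp (x - z) + t * exp (y - z)) by nra.
    nra.
  - intro Hxy.
    assert (Hx : x - z <> 0) by (unfold z; intro; apply Hxy; nra).
    pose proof (exp_ineq1 _ Hx).
    assert (1 < (1 - t) * exp (x - z) + t * exp (y - z)) by nra.
    nra.
Qed.

Lemma expcomb_strictly_concave c0 c :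
  (forall m, c m < 0) -> strictly_concave3 (expcomb c0 c).
Proof.
  intros Hneg p q t Hpq Ht.
  destruct (alpha_separates p q Hpq) as [m0 Hm0].
  unfold expcomb, ealpha.
  replace ((1 - t) * (c0 + sum3 (fun m => c m * exp (alpha p m)))
           + t * (c0 + sum3 (fun m => c m * exp (alpha q m))))
    with (c0 + sum3 (fun m => c m * ((1 - t) * exp (alpha p m) + t * exp (alpha q m))))
    by (unfold sum3; ring).
  apply Rplus_lt_compat_l, sum3_lt.
  - intro m; rewrite alpha_lin.
    apply Rmult_le_compat_neg_l; [apply Rlt_le, Hneg|].
    apply exp_strict_convex; auto.
  - exists m0; rewrite alpha_lin.
    apply Rmult_lt_gt_compat_neg_l; [apply Hneg|].
    apply exp_strict_convex; auto.
Qed.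

Lemma RInt01_primitive (F f : R -> R) :
  (forall t, derivable_pt_lim F t (f t)) -> continuity f ->
  inhabited (Riemann_integrable f 0 1) /\ RInt01 f = F 1 - F 0.
Proof.
  intros HF Hf.
  set (G := @mkC1 F (fun t => exist _ (f t) (HF t)) Hf).
  assert (Hint : Riemann_integrable f 0 1) by exact (RiemannInt_P32 G 0 1).
  split; [constructor; exact Hint|].
  unfold RInt01; destruct (excluded_middle_informative _) as [Hi|Hn].
  - exact (FTC_Riemann G _).
  - exfalso; apply Hn; constructor; exact Hint.
Qed.

Definition seg_potential (l : pt) (t : R) : R :=
  -2 * sum3 (fun m => exp (alpha l m * t + 0)).

Definition seg_potential' (l : pt) (t : R) : R :=
  -2 * sum3 (fun m => alpha l m * exp (alpha l m * t + 0)).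

Lemma seg_potential_derivative l t :
  derivable_pt_lim (seg_potential l) t (seg_potential' l t).
Proof.
  apply (derivable_pt_lim_scal (fun t => sum3 (fun m => exp (alpha l m * t + 0)))).
  apply (derivable_pt_lim_sum3 (fun m t => exp (alpha l m * t + 0))).
  intro m; apply derivable_pt_lim_exp_affine.
Qed.

Lemma seg_potential'_continuous l : continuity (seg_potential' l).
Proof. unfold seg_potential', sum3; reg. Qed.

Section Potential.
Variable theta : pt -> ix -> R.
Hypothesis Hpos : forall l i, 0 < theta l i.
Hypothesis Hrel : forall l i,
  exp (l i) / 2 = 2 / (theta l (nxt i) * theta l (prv i)).

Lemma omega_seg_eq l : omega_seg theta l = seg_potential' l.
Proof.
  apply functional_extensionality; intro t.
  assert (Hexp : forall m, exp (alpha l m * t + 0) = ealpha (fun j => t * l j) m)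
    by (intro m; unfold ealpha; rewrite alpha_scale; f_equal; ring).
  unfold omega_seg, seg_potential', sum3.
  rewrite !(xcoef_expcomb theta Hpos Hrel), !Hexp.
  unfold expcomb, sum3; set (e := ealpha (fun j => t * l j)).
  unfold sgn, alpha; simpl; field.
Qed.

Lemma omega_seg_primitive l :
  inhabited (Riemann_integrable (omega_seg theta l) 0 1) /\
  Wfun theta l = seg_potential l 1 - seg_potential l 0.
Proof.
  unfold Wfun; rewrite omega_seg_eq.
  apply RInt01_primitive;
    [apply seg_potential_derivative|apply seg_potential'_continuous].
Qed.

Lemma Wfun_expcomb : Wfun theta = expcomb 6 (fun _ => -2).
Proof.
  apply functional_extensionality; intro l.
  rewrite (proj2 (omega_seg_primitive l)).
  unfold seg_potential, expcomb, ealpha, sum3.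
  rewrite !Rmult_0_r, !Rmult_1_r, !Rplus_0_r, !exp_0; ring.
Qed.

End Potential.

(* The Hessian of W, i.e. the Jacobian d x_i / d l_j. *)
Definition Hess (l : pt) (i j : ix) : R :=
  expcomb 0 (fun m => - sgn m i * sgn m j / 2) l.

Lemma Hess_sym l i j : Hess l i j = Hess l j i.
Proof.
  unfold Hess, expcomb, sum3; field.
Qed.

Lemma Hess_quadratic_form l (v : pt) :
  sum3 (fun i => sum3 (fun j => v i * v j * Hess l i j))
  = -2 * sum3 (fun m => ealpha l m * (alpha v m * alpha v m)).
Proof. unfold Hess, expcomb, sum3, sgn, alpha; simpl; field. Qed.

Lemma Hess_negative_definite l (v : pt) :
  (exists i, v i <> 0) -> sum3 (fun i => sum3 (fun j => v i * v j * Hess l i j)) < 0.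
Proof.
  intro Hv; rewrite Hess_quadratic_form.
  destruct (alpha_nondegenerate v Hv) as [m0 Hm0].
  assert (Hsum : sum3 (fun _ => 0) < sum3 (fun m => ealpha l m * (alpha v m * alpha v m))).
  { apply sum3_lt.
    - intro m; apply Rmult_le_pos; [apply Rlt_le, exp_pos|apply Rle_0_sqr].
    - exists m0; apply Rmult_lt_0_compat; [apply exp_pos|].
      apply Rsqr_pos_lt, Hm0. }
  unfold sum3 at 1 in Hsum; lra.
Qed.

Theorem lemma2p3 (theta : pt -> ix -> R)
  (Hpos : forall l i, 0 < theta l i)
  (Hrel : forall l i,
     exp (l i) / 2 = 2 / (theta l (nxt i) * theta l (prv i))) :
  exists H : pt -> ix -> ix -> R,
    (* x_i has partial derivative H l i j in l_j; omega is closed *)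
    (forall l i j, has_partial (fun p => xcoef theta p i) j l (H l i j)) /\
    (forall l i j, H l i j = H l j i) /\
    (* the line integral defining W exists *)
    (forall l, inhabited (Riemann_integrable (omega_seg theta l) 0 1)) /\
    smooth3 (Wfun theta) /\
    (forall l i, has_partial (Wfun theta) i l (xcoef theta l i)) /\
    (* Hessian of W (= (H l i j)) is negative definite *)
    (forall l (v : pt), (exists i, v i <> 0) ->
       sum3 (fun i => sum3 (fun j => v i * v j * H l i j)) < 0) /\
    strictly_concave3 (Wfun theta).
Proof.
  assert (Hx : forall i, (fun p => xcoef theta p i) = expcomb 0 (fun m => - sgn m i)).
  { intro i; apply functional_extensionality; intro p.
    apply (xcoef_expcomb theta Hpos Hrel). }
  exists Hess.
  rewrite (Wfun_expcomb theta Hpos Hrel).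
  split; [|split; [|split; [|split; [|split; [|split]]]]].
  - intros l i j; rewrite Hx; apply partial_expcomb.
  - apply Hess_sym.
  - intro l; apply (omega_seg_primitive theta Hpos Hrel l).
  - apply smooth3_expcomb.
  - intros l i; rewrite (xcoef_expcomb theta Hpos Hrel).
    replace (expcomb 0 (fun m => - sgn m i) l)
      with (expcomb 0 (fun m => -2 * sgn m i / 2) l)
      by (unfold expcomb, sum3; field).
    apply partial_expcomb.
  - apply Hess_negative_definite.
  - apply expcomb_strictly_concave; intro; lra.
Qed.
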